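(* Let $p,d\in C^{2}([0,\infty),\mathbb{R})$, $b\in C^2([0,\infty),\mathbb{C})$, $c\in C^1([0,\infty),\mathbb{C})$, $q\in C([0,\infty),\mathbb{R})$ with $p>0$ on $[0,\infty)$, and assume: (B1) the (possibly improper) limit $d_\infty:=\lim_{t\to\infty}d(t)\in\mathbb{R}\cup\{\pm\infty\}$ exists; (B2) there are $\beta,\gamma>0$ with $|b(t)|\le\beta(|d(t)|+1)$, $|c(t)|\le\gamma(|d(t)|+1)$ for all $t\ge0$; (C1) for $\lambda\in\mathbb{R}\setminus(\overline{\Delta([0,\infty))}\cup\{d_\infty\})$ the limits $\lim_{t\to\infty}\pi(t,\lambda)$ and $\lim_{t\to\infty}\frac{\partial}{\partial t}\pi(t,\lambda)$ exist and are finite, and $\lim_{t\to\infty}\pi(t,\lambda)\neq0$ for some such $\lambda$; (C2) for $\lambda\in\mathbb{R}\setminus\{d_\infty\}$ the limits $\lim_{t\to\infty}\frac{\overline{b}c}{d-\lambda}(t)$ and $\lim_{t\to\infty}\frac{\partial}{\partial t}\frac{\overline{b}c}{d-\lambda}(t)$ exist and are finite; (C3) for $\lambda\in\mathbb{R}\setminus\{d_\infty\}$ the limit $\lim_{t\to\infty}\big(q-\lambda-\frac{|c|^2}{d-\lambda}\big)(t)$ exists and is finite. Let $\sigma^{\mathrm s}:=\{\lambda\in\mathbb{R}\setminus(\overline{\Delta([0,\infty))}\cup\{d_\infty\}):\ (\lim_{t\to\infty}\frac{\rho(t,\lambda)}{\pi(t,\lambda)})^2-4\lim_{t\to\infty}\frac{\kappa(t,\lambda)}{\pi(t,\lambda)}\ge0\}$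 and $E:=\overline{\Delta([0,\infty))}\cup\{d_\infty\}$. Then there exist $s_-,s_+,s\in\mathbb{R}$ with $s_-\le s_+\le s$ such that: (i) if $d_\infty\in\mathbb{R}$: when $\lim_{t\to\infty}p(t)>0$, either $\sigma^{\mathrm s}=([s_-,s_+]\cup[s,+\infty))\setminus E$ or $\sigma^{\mathrm s}=[s,+\infty)\setminus E$; when $\lim_{t\to\infty}p(t)=0$, $\sigma^{\mathrm s}=((-\infty,s_-]\cup[s_+,+\infty))\setminus E$; (ii) if $d_\infty=+\infty$: $\sigma^{\mathrm s}=[s_-,s_+]\setminus\overline{\Delta([0,\infty))}$ if $\lim_{t\to\infty}\frac{|b|^2}{d^2}>0$; $\sigma^{\mathrm s}=[s,+\infty)\setminus\overline{\Delta([0,\infty))}$ if $\lim\frac{|b|^2}{d^2}=0$ and $\lim_{t\to\infty}(p-\frac{|b|^2}{d})>0$; $\sigma^{\mathrm s}=(-\infty,s]\setminus\overline{\Delta([0,\infty))}$ if $\lim\frac{|b|^2}{d^2}=0$ and $\lim_{t\to\infty}(p-\frac{|b|^2}{d})<0$; (iii) if $d_\infty=-\infty$: $\sigma^{\mathrm s}=[s_-,s_+]\setminus\overline{\Delta([0,\infty))}$ if $\lim_{t\to\infty}\frac{|b|^2}{d^2}>0$; $\sigma^{\mathrm s}=[s,+\infty)\setminus\overline{\Delta([0,\infty))}$ if $\lim_{t\to\infty}\frac{|b|^2}{d^2}=0$.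
   Context: Notation: $\Delta(t):=d(t)-|b(t)|^2/p(t)$. For $t$ with $d(t)\ne\lambda$: $\pi(t,\lambda):=p(t)-\frac{|b(t)|^2}{d(t)-\lambda}$, $\rho(t,\lambda):=-\frac{2\operatorname{Im}(b(t)\overline{c(t)})}{d(t)-\lambda}+i\frac{\partial}{\partial t}\pi(t,\lambda)$, $\kappa(t,\lambda):=q(t)-\lambda-\frac{|c(t)|^2}{d(t)-\lambda}+\frac{\partial}{\partial t}\Big(\frac{\overline{b(t)}c(t)}{d(t)-\lambda}\Big)$. The limits of $p$, $|b|^2/d^2$, $p-|b|^2/d$ appearing in the case distinctions exist in the respective cases under the hypotheses. The set $\sigma^{\mathrm s}$ is the singular part $\sigma^{\mathrm s}_{\mathrm{ess}}(\mathcal{A})$ of the essential spectrum of every closed symmetric extension $\mathcal{A}$ of the operator $\mathcal{A}_0$ in $L^2(0,\infty)^2$, $\mathcal{A}_0\binom{y_1}{y_2}=\binom{-(py_1')'+qy_1-(\overline{b}y_2)'+\overline{c}y_2}{by_1'+cy_1+dy_2}$ on $C_0^2((0,\infty))\oplus C_0^1((0,\infty))$. *)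

From Stdlib Require Import Reals.
From Coquelicot Require Import Coquelicot.
Open Scope R_scope.

Definition cont_half (f : R -> R) (t : R) : Prop :=
  filterlim f (within (fun u => 0 <= u) (locally t)) (locally (f t)).

Definition Ck_half (k : nat) (f : R -> R) : Prop :=
  exists F : nat -> R -> R,
    F 0%nat = f /\
    (forall i, (i <= k)%nat -> forall t, 0 <= t -> cont_half (F i) t) /\
    (forall i, (i < k)%nat -> forall t, 0 < t -> is_derive (F i) t (F (S i) t)).

Definition CCk_half (k : nat) (f : R -> C) : Prop :=
  Ck_half k (fun t => Re (f t)) /\ Ck_half k (fun t => Im (f t)).

Definition CDerive (f : R -> C) (t : R) : C :=
  (Derive (fun s => Re (f s)) t, Derive (fun s => Im (f s)) t).

Definition is_limC (f : R -> C) (l : C) : Prop :=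
  is_lim (fun t => Re (f t)) p_infty (Re l) /\
  is_lim (fun t => Im (f t)) p_infty (Im l).

Definition ex_limC (f : R -> C) : Prop := exists l, is_limC f l.

Section Coefficients.
Variables (p q d : R -> R) (b c : R -> C).

Definition Delta (t : R) : R := d t - (Cmod (b t))^2 / p t.

Definition in_clDelta (lam : R) : Prop :=
  forall eps, 0 < eps -> exists t, 0 <= t /\ Rabs (Delta t - lam) < eps.

Definition pi_f (t lam : R) : R := p t - (Cmod (b t))^2 / (d t - lam).

Definition bc_f (lam : R) (t : R) : C :=
  (Cconj (b t) * c t * RtoC (/ (d t - lam)))%C.

Definition rho_f (t lam : R) : C :=
  (- 2 * Im (b t * Cconj (c t))%C / (d t - lam),
   Derive (fun s => pi_f s lam) t).

Definition kappa_f (t lam : R) : C :=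
  (RtoC (q t - lam - (Cmod (c t))^2 / (d t - lam)) + CDerive (bc_f lam) t)%C.

Definition notE (dinf : Rbar) (lam : R) : Prop :=
  ~ in_clDelta lam /\ Finite lam <> dinf.

Definition sigma_s (dinf : Rbar) (lam : R) : Prop :=
  notE dinf lam /\
  exists r k : C,
    is_limC (fun t => (rho_f t lam / RtoC (pi_f t lam))%C) r /\
    is_limC (fun t => (kappa_f t lam / RtoC (pi_f t lam))%C) k /\
    Im (r * r - RtoC 4 * k)%C = 0 /\ 0 <= Re (r * r - RtoC 4 * k)%C.

End Coefficients.

From Pilot Require Import Defs.
From Stdlib Require Import Reals Lra Lia Classical.
From Coquelicot Require Import Coquelicot.
Open Scope R_scope.

(* The functions [pi(., lam)] and [bbar c / (d - lam)] converge together with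
   their derivatives, so the derivatives tend to 0: the limits of [rho / pi] and [kappa / pi] are
   real, and [lam] lies in [sigma^s] iff [alpha^2 - 4 k pi_oo >= 0], where [alpha], [k] and [pi_oo]
   are the limits of [-2 Im(b cbar) / (d - lam)], [q - lam - |c|^2 / (d - lam)] and [pi(., lam)].
   Here [pi_oo <> 0], since otherwise [Delta - lam = (d - lam) pi / p] would tend to 0.

   The functions [p - |b|^2 / (d - x)] form a pencil in [x], and two of its members (at the given
   point with [lim pi <> 0] and a nearby point off [E]) determine the asymptotics of [p] and
   [|b|^2]; (C3) does the same for [q] and [|c|^2].  If [d -> r] is finite, then [p], [|b|^2], [q],
   [|c|^2] and [Im(b cbar)] converge, and [(r - lam)^2] times the discriminant is a cubic in [lam]
   with leading coefficient [lim p], or a quadratic with leading coefficient [lim |b|^2 > 0] when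
   [lim p = 0].  If [d -> +-oo], then [|b|^2 / d^2 -> L], [|c|^2 / d^2 -> K] and
   [p - |b|^2 / d -> P], and the discriminant is a quadratic with leading coefficient
   [-(1 + K) L], linear with slope [(1 + K) P] when [L = 0].  The possible shapes of [sigma^s] are
   the nonnegativity sets of these polynomials. *)

Notation near_infty P := (Rbar_locally p_infty P).
Notation lim_infty f l := (is_lim f p_infty (Finite l)).

Lemma near_infty_gt (a : R) : near_infty (fun t => a < t).
Proof. now exists a. Qed.

Lemma near_infty_threshold (P : R -> Prop) :
  near_infty P -> exists T, 0 <= T /\ forall t, T < t -> P t.
Proof.
intros [M HM]. exists (Rmax 0 M). split; [apply Rmax_l|].
intros t Ht. apply HM. pose proof (Rmax_r 0 M). lra.
Qed.

Lemma lim_infty_ext_near (f g : R -> R) (l : R) :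
  near_infty (fun t => f t = g t) -> lim_infty f l -> lim_infty g l.
Proof. exact (is_lim_ext_loc f g p_infty l). Qed.

Lemma lim_infty_eq (f : R -> R) (l l' : R) : lim_infty f l -> l = l' -> lim_infty f l'.
Proof. now intros H <-. Qed.

Lemma lim_infty_unique (f : R -> R) (l l' : R) : lim_infty f l -> lim_infty f l' -> l = l'.
Proof.
intros H H'. apply is_lim_unique in H, H'. rewrite H in H'. now injection H'.
Qed.

Lemma lim_infty_Rbar_unique (f : R -> R) (l : Rbar) (a : R) :
  is_lim f p_infty l -> lim_infty f a -> l = Finite a.
Proof. intros H H'. apply is_lim_unique in H, H'. congruence. Qed.

Lemma lim_infty_const (a : R) : lim_infty (fun _ => a) a.
Proof. apply is_lim_const. Qed.

Lemma lim_infty_plus (f g : R -> R) (a b : R) :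
  lim_infty f a -> lim_infty g b -> lim_infty (fun t => f t + g t) (a + b).
Proof. apply is_lim_plus'. Qed.

Lemma lim_infty_minus (f g : R -> R) (a b : R) :
  lim_infty f a -> lim_infty g b -> lim_infty (fun t => f t - g t) (a - b).
Proof. apply is_lim_minus'. Qed.

Lemma lim_infty_mult (f g : R -> R) (a b : R) :
  lim_infty f a -> lim_infty g b -> lim_infty (fun t => f t * g t) (a * b).
Proof. intros Hf Hg. exact (is_lim_mult f g p_infty a b Hf Hg I). Qed.

Lemma lim_infty_inv (f : R -> R) (a : R) :
  lim_infty f a -> a <> 0 -> lim_infty (fun t => / f t) (/ a).
Proof. intros Hf Ha. apply (is_lim_inv f p_infty a Hf). congruence. Qed.

Lemma lim_infty_div (f g : R -> R) (a b : R) :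
  lim_infty f a -> lim_infty g b -> b <> 0 -> lim_infty (fun t => f t / g t) (a / b).
Proof. intros. apply lim_infty_mult; auto. now apply lim_infty_inv. Qed.

Lemma lim_infty_opp (f : R -> R) (a : R) : lim_infty f a -> lim_infty (fun t => - f t) (- a).
Proof. apply is_lim_opp. Qed.

Ltac lim_infty_rules :=
  repeat first [ eassumption | apply lim_infty_const | apply lim_infty_minus
               | apply lim_infty_plus | apply lim_infty_mult | apply lim_infty_inv
               | apply lim_infty_opp ].

Lemma lim_infty_near_gt (f : R -> R) (l a : R) :
  lim_infty f l -> a < l -> near_infty (fun t => a < f t).
Proof. intros Hf Ha. apply (Hf (fun y => a < y)). now apply open_gt. Qed.

Lemma lim_infty_near_lt (f : R -> R) (l a : R) :
  lim_infty f l -> l < a -> near_infty (fun t => f t < a).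
Proof. intros Hf Ha. apply (Hf (fun y => y < a)). now apply open_lt. Qed.

Lemma lim_infty_near_neq (f : R -> R) (l a : R) :
  lim_infty f l -> l <> a -> near_infty (fun t => f t <> a).
Proof.
intros Hf Ha. destruct (Rdichotomy _ _ Ha).
- apply (filter_imp (fun t => f t < a)); [intros; lra|]. now apply (lim_infty_near_lt f l).
- apply (filter_imp (fun t => a < f t)); [intros; lra|]. now apply (lim_infty_near_gt f l).
Qed.

Lemma lim_infty_near_small (f : R -> R) (eps : R) :
  lim_infty f 0 -> 0 < eps -> near_infty (fun t => Rabs (f t) < eps).
Proof.
intros Hf He. apply (filter_imp (fun t => - eps < f t /\ f t < eps)).
- intros t Ht. now apply Rabs_def1.
- apply filter_and; [apply (lim_infty_near_gt f 0) | apply (lim_infty_near_lt f 0)]; auto; lra.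
Qed.

Lemma lim_infty_nonneg (f : R -> R) (l : R) :
  near_infty (fun t => 0 <= f t) -> lim_infty f l -> 0 <= l.
Proof. intros H Hf. exact (is_lim_le_loc (fun _ => 0) f p_infty 0 l H (lim_infty_const 0) Hf). Qed.

(* By the mean value theorem, [f (T + 2) - f (T + 1)] is a value of [f'] near [m], yet tends to 0. *)
Lemma derive_lim_infty_0 (f : R -> R) (l m : R) :
  near_infty (fun t => ex_derive f t) -> lim_infty f l -> lim_infty (Derive f) m -> m = 0.
Proof.
intros Hd Hf Hm. destruct (Req_dec m 0) as [|Hm0]; [assumption|exfalso].
assert (Hpos : 0 < Rabs m) by now apply Rabs_pos_lt.
assert (Hf0 : lim_infty (fun t => f t - l) 0).
{ eapply lim_infty_eq; [lim_infty_rules | ring]. }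
assert (Hm1 : lim_infty (fun t => Derive f t - m) 0).
{ eapply lim_infty_eq; [lim_infty_rules | ring]. }
assert (Hnear : near_infty (fun t => ex_derive f t /\
          Rabs (f t - l) < Rabs m / 4 /\ Rabs (Derive f t - m) < Rabs m / 2)).
{ repeat apply filter_and; [assumption | ..]; apply lim_infty_near_small; auto; lra. }
destruct (near_infty_threshold _ Hnear) as [T [_ HT]].
destruct (MVT_gen f (T + 1) (T + 2) (Derive f)) as [xi [Hxi Hmvt]].
- intros x Hx. rewrite Rmin_left, Rmax_right in Hx by lra.
  apply Derive_correct, HT. lra.
- intros x Hx. rewrite Rmin_left, Rmax_right in Hx by lra.
  apply continuity_pt_filterlim, (@ex_derive_continuous R_AbsRing R_NormedModule), HT. lra.
- rewrite Rmin_left, Rmax_right in Hxi by lra.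
  replace (T + 2 - (T + 1)) with 1 in Hmvt by ring. rewrite Rmult_1_r in Hmvt.
  destruct (HT (T + 1) ltac:(lra)) as [_ [H1 _]].
  destruct (HT (T + 2) ltac:(lra)) as [_ [H2 _]].
  destruct (HT xi ltac:(lra)) as [_ [_ H3]].
  assert (Rabs (Derive f xi) < Rabs m / 2).
  { rewrite <- Hmvt. replace (f (T + 2) - f (T + 1)) with ((f (T + 2) - l) - (f (T + 1) - l)) by ring.
    eapply Rle_lt_trans; [apply Rabs_triang|]. rewrite Rabs_Ropp. lra. }
  assert (Rabs m <= Rabs (Derive f xi) + Rabs (Derive f xi - m)).
  { replace m with (Derive f xi - (Derive f xi - m)) at 1 by ring.
    eapply Rle_trans; [apply Rabs_triang|]. rewrite Rabs_Ropp. lra. }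
  lra.
Qed.

Lemma Rmult_nonneg_iff_l (a x : R) : 0 < a -> (0 <= a * x <-> 0 <= x).
Proof.
intros Ha. split; intros H; [|now apply Rmult_le_pos; [lra|]].
apply (Rmult_le_reg_l a); [assumption|]. lra.
Qed.

Lemma prod_sub_nonneg_iff (u v x : R) : u <= v ->
  (0 <= (x - u) * (x - v) <-> x <= u \/ v <= x).
Proof.
intros Huv. split.
- intros H. destruct (Rle_or_lt x u); [now left|]. destruct (Rle_or_lt v x); [now right|].
  exfalso. assert (0 < (x - u) * (v - x)) by (apply Rmult_lt_0_compat; lra). nra.
- intros [H|H]; nra.
Qed.

Lemma cubic_sorted_nonneg_iff (a b c x : R) : a <= b <= c ->
  (0 <= (x - a) * (x - b) * (x - c) <-> a <= x <= b \/ c <= x).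
Proof.
intros Habc. split.
- intros H. destruct (Rle_or_lt c x); [now right|].
  destruct (Rle_or_lt a x), (Rle_or_lt x b); try (left; lra); exfalso.
  + assert (0 < (x - a) * (x - b) * (c - x)) by (apply Rmult_lt_0_compat; [apply Rmult_lt_0_compat|]; lra). nra.
  + assert (0 < (a - x) * (b - x) * (c - x)) by (apply Rmult_lt_0_compat; [apply Rmult_lt_0_compat|]; lra). nra.
- intros [H|H].
  + replace ((x - a) * (x - b) * (x - c)) with ((x - a) * ((b - x) * (c - x))) by ring.
    apply Rmult_le_pos; [|apply Rmult_le_pos]; lra.
  + apply Rmult_le_pos; [apply Rmult_le_pos|]; lra.
Qed.

(* Completing the square: [4 a (a x^2 + b x + c) = (2 a x + b)^2 - (b^2 - 4 a c)]. *)
Lemma quadratic_pos_or_factor (a b c : R) : 0 < a ->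
  (forall x, 0 < a * x * x + b * x + c) \/
  exists u v, u <= v /\ forall x, a * x * x + b * x + c = a * ((x - u) * (x - v)).
Proof.
intros Ha. destruct (Rlt_or_le (b * b - 4 * a * c) 0) as [Hd|Hd].
- left. intros x.
  assert (4 * a * (a * x * x + b * x + c) = (2 * a * x + b) ^ 2 - (b * b - 4 * a * c)) by ring.
  pose proof (pow2_ge_0 (2 * a * x + b)). nra.
- right. pose proof (sqrt_sqrt _ Hd) as Hs. pose proof (sqrt_pos (b * b - 4 * a * c)).
  set (s := sqrt (b * b - 4 * a * c)) in *.
  exists ((- b - s) / (2 * a)), ((- b + s) / (2 * a)). split.
  + apply Rmult_le_compat_r; [left; apply Rinv_0_lt_compat|]; lra.
  + intros x. field_simplify; [|lra]. replace (s ^ 2) with (s * s) by ring. rewrite Hs. field. lra.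
Qed.

Lemma quadratic_nonneg_set_pos_lead (a b c : R) : 0 < a -> exists sm sp, sm <= sp /\
  forall x, 0 <= a * x * x + b * x + c <-> x <= sm \/ sp <= x.
Proof.
intros Ha. destruct (quadratic_pos_or_factor a b c Ha) as [Hpos|[u [v [Huv Hf]]]].
- exists 0, 0. split; [lra|]. intros x. specialize (Hpos x). split; intros; lra.
- exists u, v. split; [assumption|]. intros x.
  rewrite Hf, Rmult_nonneg_iff_l by assumption. now apply prod_sub_nonneg_iff.
Qed.

Lemma quadratic_nonneg_set_neg_lead (a b c : R) : a < 0 ->
  (exists sm sp, sm <= sp /\ forall x, 0 <= a * x * x + b * x + c <-> sm <= x <= sp) \/
  (forall x, a * x * x + b * x + c < 0).
Proof.
intros Ha. destruct (quadratic_pos_or_factor (- a) (- b) (- c)) as [Hpos|[u [v [Huv Hf]]]]; [lra| |].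
- right. intros x. specialize (Hpos x). lra.
- left. exists u, v. split; [assumption|]. intros x.
  replace (a * x * x + b * x + c) with (- a * ((x - u) * (v - x))) by (specialize (Hf x); lra).
  rewrite Rmult_nonneg_iff_l by lra. split; [|intros; nra].
  intros H. destruct (Rle_or_lt u x), (Rle_or_lt x v); try lra; exfalso; nra.
Qed.

Lemma cubic_has_root (a3 a2 a1 a0 : R) : 0 < a3 ->
  exists r, a3 * r ^ 3 + a2 * r ^ 2 + a1 * r + a0 = 0.
Proof.
intros Ha. set (f x := a3 * x ^ 3 + a2 * x ^ 2 + a1 * x + a0).
pose proof (Rabs_pos (a2 / a3)). pose proof (Rabs_pos (a1 / a3)). pose proof (Rabs_pos (a0 / a3)).
set (M := 1 + Rabs (a2 / a3) + Rabs (a1 / a3) + Rabs (a0 / a3)).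
assert (HM : 1 <= M) by (unfold M; lra).
(* On [|x| = M] the leading term of [f x / a3] dominates the others. *)
assert (Hdom : forall x, Rabs x = M -> Rabs (f x / a3 - x ^ 3) < M ^ 3).
{ intros x Hx.
  replace (f x / a3 - x ^ 3) with (a2 / a3 * x ^ 2 + a1 / a3 * x + a0 / a3) by (unfold f; field; lra).
  assert (Rabs (a2 / a3 * x ^ 2 + a1 / a3 * x + a0 / a3)
          <= Rabs (a2 / a3) * M ^ 2 + Rabs (a1 / a3) * M + Rabs (a0 / a3)).
  { eapply Rle_trans; [apply Rabs_triang|]. eapply Rle_trans; [apply Rplus_le_compat_r, Rabs_triang|].
    rewrite !Rabs_mult, <- RPow_abs, Hx. lra. }
  assert (M * M ^ 2 - (Rabs (a2 / a3) * M ^ 2 + Rabs (a1 / a3) * M + Rabs (a0 / a3))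
          = M ^ 2 + Rabs (a1 / a3) * M * (M - 1) + Rabs (a0 / a3) * (M ^ 2 - 1)) by (unfold M at 1; ring).
  assert (0 <= Rabs (a1 / a3) * M * (M - 1)) by (apply Rmult_le_pos; [apply Rmult_le_pos|]; lra).
  assert (0 <= Rabs (a0 / a3) * (M ^ 2 - 1)) by (apply Rmult_le_pos; nra).
  nra. }
assert (Hinv : 0 < / a3) by now apply Rinv_0_lt_compat.
destruct (IVT f (- M) M) as [r [_ Hr]].
- intros y. unfold f. reg.
- lra.
- assert (Hneg := Hdom (- M) ltac:(rewrite Rabs_Ropp; apply Rabs_right; lra)).
  apply Rabs_def2 in Hneg. replace ((- M) ^ 3) with (- M ^ 3) in Hneg by ring.
  apply (Rmult_lt_reg_r (/ a3)); [assumption|]. unfold Rdiv in Hneg. lra.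
- assert (Hpos := Hdom M ltac:(apply Rabs_right; lra)).
  apply Rabs_def2 in Hpos. apply (Rmult_lt_reg_r (/ a3)); [assumption|]. unfold Rdiv in Hpos. lra.
- now exists r.
Qed.

Lemma cubic_nonneg_set (a3 a2 a1 a0 : R) : 0 < a3 -> exists sm sp s, sm <= sp <= s /\
  forall x, (0 <= a3 * x ^ 3 + a2 * x ^ 2 + a1 * x + a0 <-> sm <= x <= sp \/ s <= x).
Proof.
intros Ha. destruct (cubic_has_root a3 a2 a1 a0 Ha) as [r Hr].
assert (Hfac : forall x, a3 * x ^ 3 + a2 * x ^ 2 + a1 * x + a0
  = (x - r) * (a3 * x * x + (a2 + a3 * r) * x + (a1 + r * (a2 + a3 * r)))).
{ intros x. replace a0 with (- (a3 * r ^ 3 + a2 * r ^ 2 + a1 * r)) by lra. ring. }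
destruct (quadratic_pos_or_factor a3 (a2 + a3 * r) (a1 + r * (a2 + a3 * r)) Ha)
  as [Hpos|[u [v [Huv Hq]]]].
- exists r, r, r. split; [lra|]. intros x. rewrite Hfac, Rmult_comm, Rmult_nonneg_iff_l by apply Hpos.
  lra.
- assert (Hf : forall x, a3 * x ^ 3 + a2 * x ^ 2 + a1 * x + a0 = a3 * ((x - r) * (x - u) * (x - v))).
  { intros x. rewrite Hfac, Hq. ring. }
  destruct (Rle_or_lt r u); [|destruct (Rle_or_lt r v)].
  + exists r, u, v. split; [lra|]. intros x.
    rewrite Hf, Rmult_nonneg_iff_l by assumption. apply cubic_sorted_nonneg_iff. lra.
  + exists u, r, v. split; [lra|]. intros x.
    rewrite Hf, Rmult_nonneg_iff_l by assumption.
    replace ((x - r) * (x - u) * (x - v)) with ((x - u) * (x - r) * (x - v)) by ring.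
    apply cubic_sorted_nonneg_iff. lra.
  + exists u, v, r. split; [lra|]. intros x.
    rewrite Hf, Rmult_nonneg_iff_l by assumption.
    replace ((x - r) * (x - u) * (x - v)) with ((x - u) * (x - v) * (x - r)) by ring.
    apply cubic_sorted_nonneg_iff. lra.
Qed.

Lemma Ck_half_ex_derive (k : nat) (f : R -> R) :
  Ck_half (S k) f -> forall t, 0 < t -> ex_derive f t.
Proof.
intros [F [<- [_ HF]]] t Ht. exists (F 1%nat t). apply HF; [lia | assumption].
Qed.

Lemma Cdiv_RtoC (z : C) (x : R) : x <> 0 -> (z / RtoC x)%C = (Re z / x, Im z / x).
Proof.
intros Hx. destruct z as [z1 z2]. unfold Cdiv, Cinv, Cmult, RtoC, Re, Im. simpl.
f_equal; field; assumption.
Qed.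

Lemma Im_mul_Cconj (z w : C) : Im (z * Cconj w)%C = Im z * Re w - Re z * Im w.
Proof. destruct z, w. unfold Cconj, Cmult, Re, Im. simpl. ring. Qed.

Lemma is_limC_unique (f : R -> C) (z w : C) : is_limC f z -> is_limC f w -> z = w.
Proof.
destruct z as [z1 z2], w as [w1 w2]. intros [H1 H2] [H1' H2']. simpl in *.
now rewrite (lim_infty_unique _ _ _ H1 H1'), (lim_infty_unique _ _ _ H2 H2').
Qed.

Lemma is_limC_div_RtoC (f : R -> C) (g : R -> R) (z : C) (a : R) :
  is_limC f z -> lim_infty g a -> a <> 0 ->
  is_limC (fun t => f t / RtoC (g t))%C (z / RtoC a)%C.
Proof.
intros [Hre Him] Hg Ha. rewrite Cdiv_RtoC by assumption.
assert (Hne := lim_infty_near_neq g a 0 Hg Ha).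
split.
- apply (lim_infty_ext_near (fun t => Re (f t) / g t)); [|now apply lim_infty_div].
  apply (filter_imp (fun t => g t <> 0)); [|exact Hne]. intros t Ht. now rewrite Cdiv_RtoC.
- apply (lim_infty_ext_near (fun t => Im (f t) / g t)); [|now apply lim_infty_div].
  apply (filter_imp (fun t => g t <> 0)); [|exact Hne]. intros t Ht. now rewrite Cdiv_RtoC.
Qed.

Lemma discr_of_limits_iff (f g : R -> C) (h : R -> R) (al k a : R) :
  is_limC f (RtoC al) -> is_limC g (RtoC k) -> lim_infty h a -> a <> 0 ->
  ((exists r k' : C,
      is_limC (fun t => f t / RtoC (h t))%C r /\ is_limC (fun t => g t / RtoC (h t))%C k' /\
      Im (r * r - RtoC 4 * k')%C = 0 /\ 0 <= Re (r * r - RtoC 4 * k')%C)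
   <-> 0 <= al * al - 4 * k * a).
Proof.
intros Hf Hg Hh Ha.
pose proof (is_limC_div_RtoC f h _ a Hf Hh Ha) as Hr.
pose proof (is_limC_div_RtoC g h _ a Hg Hh Ha) as Hk.
rewrite Cdiv_RtoC in Hr, Hk by assumption.
assert (Hscale : al * al - 4 * k * a = (a * a) * ((al / a) * (al / a) - 4 * (k / a))) by (field; assumption).
rewrite Hscale, Rmult_nonneg_iff_l by (apply Rsqr_pos_lt; assumption).
split.
- intros (r & k' & Hr' & Hk' & _ & Hre).
  rewrite (is_limC_unique _ _ _ Hr' Hr), (is_limC_unique _ _ _ Hk' Hk) in Hre.
  simpl in Hre. unfold Rdiv in Hre. lra.
- intros H. exists (Re (RtoC al) / a, Im (RtoC al) / a), (Re (RtoC k) / a, Im (RtoC k) / a).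
  do 2 (split; [assumption|]). simpl. unfold Rdiv in *. split; lra.
Qed.

Lemma near_infty_sub_neq_finite (d : R -> R) (r a : R) :
  lim_infty d r -> r <> a -> near_infty (fun t => d t - a <> 0).
Proof.
intros Hd Hra. apply (lim_infty_near_neq _ (r - a)); [lim_infty_rules | lra].
Qed.

Lemma near_infty_sub_neq_infinite (d : R -> R) (dinf : Rbar) (a : R) :
  ~ is_finite dinf -> is_lim d p_infty dinf -> near_infty (fun t => d t - a <> 0).
Proof.
intros Hinf Hd. destruct dinf as [r| |]; [now contradict Hinf|..].
- apply (filter_imp (fun t => a < d t)); [intros; lra|]. apply (Hd (fun y => a < y)). now exists a.
- apply (filter_imp (fun t => d t < a)); [intros; lra|]. apply (Hd (fun y => y < a)). now exists a.
Qed.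

Lemma lim_infty_inv_sub_infinite (d : R -> R) (dinf : Rbar) (a : R) :
  ~ is_finite dinf -> is_lim d p_infty dinf -> lim_infty (fun t => / (d t - a)) 0.
Proof.
intros Hinf Hd. destruct dinf as [r| |]; [now contradict Hinf|..].
- apply (is_lim_inv _ _ p_infty); [|easy].
  apply (is_lim_minus _ _ _ p_infty a); [exact Hd | apply is_lim_const | easy].
- apply (is_lim_inv _ _ m_infty); [|easy].
  apply (is_lim_minus _ _ _ m_infty a); [exact Hd | apply is_lim_const | easy].
Qed.

Lemma lim_infty_ratio_sub_infinite (d : R -> R) (dinf : Rbar) (a a' : R) :
  ~ is_finite dinf -> is_lim d p_infty dinf -> lim_infty (fun t => (d t - a) / (d t - a')) 1.
Proof.
intros Hinf Hd. pose proof (lim_infty_inv_sub_infinite d dinf a' Hinf Hd).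
apply (lim_infty_ext_near (fun t => 1 + (a' - a) * / (d t - a'))).
- apply (filter_imp (fun t => d t - a' <> 0)); [intros; field; assumption|].
  now apply (near_infty_sub_neq_infinite d dinf).
- eapply lim_infty_eq; [lim_infty_rules | ring].
Qed.

(* For [G_x := g - f / (d - x)], the difference [G_x - G_y] is [(y - x) f / ((d - x) (d - y))]:
   two members of the pencil determine [f] and [g] asymptotically. *)
Lemma pencil_ratio_lim (f g d : R -> R) (x y l1 l2 : R) : x <> y ->
  near_infty (fun t => d t - x <> 0) -> near_infty (fun t => d t - y <> 0) ->
  lim_infty (fun t => g t - f t / (d t - x)) l1 -> lim_infty (fun t => g t - f t / (d t - y)) l2 ->
  lim_infty (fun t => f t / ((d t - x) * (d t - y))) ((l1 - l2) / (y - x)).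
Proof.
intros Hxy Hx Hy H1 H2.
apply (lim_infty_ext_near (fun t => ((g t - f t / (d t - x)) - (g t - f t / (d t - y))) / (y - x))).
- apply (filter_imp (fun t => d t - x <> 0 /\ d t - y <> 0)); [|now apply filter_and].
  intros t [Ht1 Ht2]. field. repeat split; lra.
- apply lim_infty_div; [lim_infty_rules | lim_infty_rules | lra].
Qed.

Lemma pencil_lims_finite (f g d : R -> R) (r x y l1 l2 : R) : x <> y -> r <> x -> r <> y ->
  lim_infty d r ->
  lim_infty (fun t => g t - f t / (d t - x)) l1 -> lim_infty (fun t => g t - f t / (d t - y)) l2 ->
  lim_infty f ((l1 - l2) / (y - x) * ((r - x) * (r - y))) /\
  lim_infty g (l1 + (l1 - l2) / (y - x) * (r - y)).
Proof.
intros Hxy Hrx Hry Hd H1 H2.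
pose proof (near_infty_sub_neq_finite d r x Hd Hrx) as Hx.
pose proof (near_infty_sub_neq_finite d r y Hd Hry) as Hy.
pose proof (pencil_ratio_lim f g d x y l1 l2 Hxy Hx Hy H1 H2) as HL.
split.
- apply (lim_infty_ext_near (fun t => f t / ((d t - x) * (d t - y)) * ((d t - x) * (d t - y)))).
  + apply (filter_imp (fun t => d t - x <> 0 /\ d t - y <> 0)); [|now apply filter_and].
    intros t [Ht1 Ht2]. field. split; assumption.
  + lim_infty_rules.
- apply (lim_infty_ext_near (fun t => (g t - f t / (d t - x)) + f t / ((d t - x) * (d t - y)) * (d t - y))).
  + apply (filter_imp (fun t => d t - x <> 0 /\ d t - y <> 0)); [|now apply filter_and].
    intros t [Ht1 Ht2]. field. split; assumption.
  + lim_infty_rules.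
Qed.

Lemma pencil_lims_infinite (f g d : R -> R) (dinf : Rbar) (x y l1 l2 : R) : x <> y ->
  ~ is_finite dinf -> is_lim d p_infty dinf ->
  lim_infty (fun t => g t - f t / (d t - x)) l1 -> lim_infty (fun t => g t - f t / (d t - y)) l2 ->
  (forall u v, lim_infty (fun t => f t / ((d t - u) * (d t - v))) ((l1 - l2) / (y - x))) /\
  (forall lam, lim_infty (fun t => g t - f t / (d t - lam)) (l1 + (x - lam) * ((l1 - l2) / (y - x)))).
Proof.
intros Hxy Hinf Hd H1 H2.
assert (Hneq := fun a => near_infty_sub_neq_infinite d dinf a Hinf Hd).
assert (Hratio := fun a a' => lim_infty_ratio_sub_infinite d dinf a a' Hinf Hd).
pose proof (pencil_ratio_lim f g d x y l1 l2 Hxy (Hneq x) (Hneq y) H1 H2) as HL.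
set (L := (l1 - l2) / (y - x)) in *.
assert (HLuv : forall u v, lim_infty (fun t => f t / ((d t - u) * (d t - v))) L).
{ intros u v.
  apply (lim_infty_ext_near (fun t => f t / ((d t - x) * (d t - y)) *
                                     ((d t - x) / (d t - u)) * ((d t - y) / (d t - v)))).
  - apply (filter_imp (fun t => (d t - x <> 0 /\ d t - y <> 0) /\ (d t - u <> 0 /\ d t - v <> 0)));
      [|repeat apply filter_and; apply Hneq].
    intros t [[Ht1 Ht2] [Ht3 Ht4]]. field. tauto.
  - eapply lim_infty_eq; [apply lim_infty_mult; [apply lim_infty_mult|]; eauto | ring]. }
split; [exact HLuv|]. intros lam.
apply (lim_infty_ext_near (fun t => (g t - f t / (d t - x)) + (x - lam) * (f t / ((d t - x) * (d t - lam))))).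
- apply (filter_imp (fun t => d t - x <> 0 /\ d t - lam <> 0)); [|apply filter_and; apply Hneq].
  intros t [Ht1 Ht2]. field. split; assumption.
- pose proof (HLuv x lam). lim_infty_rules.
Qed.

Lemma pencil_ratio_nonneg (f d : R -> R) (dinf : Rbar) (a L : R) :
  ~ is_finite dinf -> is_lim d p_infty dinf -> (forall t, 0 <= f t) ->
  lim_infty (fun t => f t / ((d t - a) * (d t - a))) L -> 0 <= L.
Proof.
intros Hinf Hd Hf HL. apply (lim_infty_nonneg (fun t => f t / ((d t - a) * (d t - a))) L); [|exact HL].
apply (filter_imp _ _ (fun t Ht => Rdiv_le_0_compat _ _ (Hf t) (Rsqr_pos_lt _ Ht))).
now apply (near_infty_sub_neq_infinite d dinf).
Qed.

Section SingularSpectrum.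

Variables (p d q : R -> R) (b c : R -> C) (dinf : Rbar).

Hypothesis p_pos : forall t, 0 <= t -> 0 < p t.
Hypothesis p_derivable : forall t, 0 < t -> ex_derive p t.
Hypothesis d_derivable : forall t, 0 < t -> ex_derive d t.
Hypothesis Re_b_derivable : forall t, 0 < t -> ex_derive (fun s => Re (b s)) t.
Hypothesis Im_b_derivable : forall t, 0 < t -> ex_derive (fun s => Im (b s)) t.
Hypothesis Re_c_derivable : forall t, 0 < t -> ex_derive (fun s => Re (c s)) t.
Hypothesis Im_c_derivable : forall t, 0 < t -> ex_derive (fun s => Im (c s)) t.
Hypothesis d_lim : is_lim d p_infty dinf.
Hypothesis pi_lims : forall lam, notE p d b dinf lam ->
  ex_finite_lim (fun t => pi_f p d b t lam) p_infty /\
  ex_finite_lim (fun t => Derive (fun s => pi_f p d b s lam) t) p_infty.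
Hypothesis pi_lim_nonzero : exists lam l, notE p d b dinf lam /\
  lim_infty (fun t => pi_f p d b t lam) l /\ l <> 0.
Hypothesis bc_lims : forall lam, Finite lam <> dinf ->
  ex_limC (bc_f d b c lam) /\ ex_limC (fun t => CDerive (bc_f d b c lam) t).
Hypothesis qc_lim : forall lam, Finite lam <> dinf ->
  ex_finite_lim (fun t => q t - lam - Cmod (c t) ^ 2 / (d t - lam)) p_infty.

Lemma pi_f_derivable (lam t : R) : 0 < t -> d t - lam <> 0 ->
  ex_derive (fun s => pi_f p d b s lam) t.
Proof.
intros Ht Hd. apply (ex_derive_ext (fun s => p s - (Re (b s) ^ 2 + Im (b s) ^ 2) / (d s - lam))).
- intros s. unfold pi_f. now rewrite Cmod2_alt.
- apply (@ex_derive_minus R_AbsRing R_NormedModule); [auto|].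
  apply ex_derive_div; [apply (@ex_derive_plus R_AbsRing R_NormedModule); apply ex_derive_pow; auto | |assumption].
  apply (@ex_derive_minus R_AbsRing R_NormedModule); [auto | apply ex_derive_const].
Qed.

Lemma Re_bc_f (lam s : R) :
  Re (bc_f d b c lam s) = (Re (b s) * Re (c s) + Im (b s) * Im (c s)) / (d s - lam).
Proof. unfold bc_f, Cconj, Cmult, RtoC, Re, Im. simpl. unfold Rdiv. ring. Qed.

Lemma Im_bc_f (lam s : R) :
  Im (bc_f d b c lam s) = (Re (b s) * Im (c s) - Im (b s) * Re (c s)) / (d s - lam).
Proof. unfold bc_f, Cconj, Cmult, RtoC, Re, Im. simpl. unfold Rdiv. ring. Qed.

Lemma bc_f_derivable (lam t : R) : 0 < t -> d t - lam <> 0 ->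
  ex_derive (fun s => Re (bc_f d b c lam s)) t /\ ex_derive (fun s => Im (bc_f d b c lam s)) t.
Proof.
intros Ht Hd. split.
- apply (ex_derive_ext (fun s => (Re (b s) * Re (c s) + Im (b s) * Im (c s)) / (d s - lam))).
  + intros s. now rewrite Re_bc_f.
  + apply ex_derive_div; [|apply (@ex_derive_minus R_AbsRing R_NormedModule); [auto | apply ex_derive_const]|assumption].
    apply (@ex_derive_plus R_AbsRing R_NormedModule); apply ex_derive_mult; auto.
- apply (ex_derive_ext (fun s => (Re (b s) * Im (c s) - Im (b s) * Re (c s)) / (d s - lam))).
  + intros s. now rewrite Im_bc_f.
  + apply ex_derive_div; [|apply (@ex_derive_minus R_AbsRing R_NormedModule); [auto | apply ex_derive_const]|assumption].
    apply (@ex_derive_minus R_AbsRing R_NormedModule); apply ex_derive_mult; auto.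
Qed.

(* Off [E] the limits of [d/dt pi] and [d/dt (bbar c / (d - lam))] vanish, so the limits of
   [rho / pi] and [kappa / pi] are real. *)
Lemma sigma_s_iff_discr (lam a al k : R) : notE p d b dinf lam ->
  near_infty (fun t => d t - lam <> 0) ->
  lim_infty (fun t => pi_f p d b t lam) a -> a <> 0 ->
  lim_infty (fun t => - 2 * Im (b t * Cconj (c t))%C / (d t - lam)) al ->
  lim_infty (fun t => q t - lam - Cmod (c t) ^ 2 / (d t - lam)) k ->
  (sigma_s p q d b c dinf lam <-> 0 <= al * al - 4 * k * a).
Proof.
intros HnE Hnear Hpi Ha Hal Hk.
assert (Hder : near_infty (fun t => 0 < t /\ d t - lam <> 0))
  by (apply filter_and; [apply near_infty_gt | exact Hnear]).
destruct (pi_lims lam HnE) as [_ [m Hm]].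
assert (Hm0 : m = 0).
{ apply (derive_lim_infty_0 (fun s => pi_f p d b s lam) a); [|assumption|exact Hm].
  apply (filter_imp _ _ (fun t Ht => pi_f_derivable lam t (proj1 Ht) (proj2 Ht)) Hder). }
destruct (bc_lims lam (proj2 HnE)) as [[w [Hw1 Hw2]] [w' [Hw1' Hw2']]].
assert (Hw1'0 : Re w' = 0).
{ apply (derive_lim_infty_0 (fun s => Re (bc_f d b c lam s)) (Re w)); [|assumption|exact Hw1'].
  apply (filter_imp _ _ (fun t Ht => proj1 (bc_f_derivable lam t (proj1 Ht) (proj2 Ht))) Hder). }
assert (Hw2'0 : Im w' = 0).
{ apply (derive_lim_infty_0 (fun s => Im (bc_f d b c lam s)) (Im w)); [|assumption|exact Hw2'].
  apply (filter_imp _ _ (fun t Ht => proj2 (bc_f_derivable lam t (proj1 Ht) (proj2 Ht))) Hder). }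
unfold sigma_s. rewrite <- (discr_of_limits_iff (fun t => rho_f p d b c t lam) (fun t => kappa_f q d b c t lam)
    (fun t => pi_f p d b t lam) al k a);
  [tauto | split | split | assumption | assumption].
- exact Hal.
- subst m. exact Hm.
- apply (is_lim_ext (fun t => (q t - lam - Cmod (c t) ^ 2 / (d t - lam))
                              + Derive (fun s => Re (bc_f d b c lam s)) t)); [reflexivity|].
  eapply lim_infty_eq; [lim_infty_rules | rewrite Hw1'0; simpl; ring].
- apply (is_lim_ext (fun t => 0 + Derive (fun s => Im (bc_f d b c lam s)) t)); [reflexivity|].
  eapply lim_infty_eq; [lim_infty_rules | rewrite Hw2'0; simpl; ring].
Qed.

Lemma not_in_clDelta_open (lam : R) : ~ in_clDelta p d b lam ->
  exists eps, 0 < eps /\ forall mu, Rabs (mu - lam) < eps -> ~ in_clDelta p d b mu.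
Proof.
intros Hlam. apply NNPP. intros Hno. apply Hlam. intros eps Heps. apply NNPP. intros Hfar.
apply Hno. exists (eps / 2). split; [lra|]. intros mu Hmu Hcl.
destruct (Hcl (eps / 2)) as [t [Ht Hmut]]; [lra|]. apply Hfar. exists t. split; [assumption|].
replace (Defs.Delta p d b t - lam) with ((Defs.Delta p d b t - mu) + (mu - lam)) by ring.
eapply Rle_lt_trans; [apply Rabs_triang | lra].
Qed.

Lemma notE_exists_other (lam : R) : notE p d b dinf lam ->
  exists mu, notE p d b dinf mu /\ mu <> lam.
Proof.
intros [Hcl Hinf]. destruct (not_in_clDelta_open lam Hcl) as [eps [Heps Hopen]].
assert (Hnear : forall h, 0 < h < eps -> ~ in_clDelta p d b (lam + h)).
{ intros h Hh. apply Hopen. replace (lam + h - lam) with h by ring. rewrite Rabs_right; lra. }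
destruct (classic (Finite (lam + eps / 2) = dinf)) as [Heq|Hneq].
- exists (lam + eps / 3). split; [split|]; [apply Hnear; lra | | lra].
  rewrite <- Heq. intros H. injection H. lra.
- exists (lam + eps / 2). split; [split|]; [apply Hnear; lra | assumption | lra].
Qed.

(* [Delta - lam = (d - lam) / p * pi]. *)
Lemma in_clDelta_of_pi_lim_0 (lam g : R) : near_infty (fun t => d t - lam <> 0) ->
  lim_infty (fun t => pi_f p d b t lam) 0 -> lim_infty (fun t => (d t - lam) / p t) g ->
  in_clDelta p d b lam.
Proof.
intros Hnear Hpi Hg.
assert (HDelta : lim_infty (fun t => Defs.Delta p d b t - lam) 0).
{ apply (lim_infty_ext_near (fun t => (d t - lam) / p t * pi_f p d b t lam)).
  - apply (filter_imp (fun t => 0 < t /\ d t - lam <> 0)); [|apply filter_and; [apply near_infty_gt | assumption]].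
    intros t [Ht Hd]. pose proof (p_pos t ltac:(lra)). unfold Defs.Delta, pi_f. field. lra.
  - eapply lim_infty_eq; [lim_infty_rules | ring]. }
intros eps Heps. destruct (near_infty_threshold _ (lim_infty_near_small _ eps HDelta Heps)) as [T [HT HTs]].
exists (T + 1). split; [lra | apply HTs; lra].
Qed.

Lemma q_pencil_lim (lam : R) : Finite lam <> dinf ->
  exists Q, lim_infty (fun t => q t - Cmod (c t) ^ 2 / (d t - lam)) Q.
Proof.
intros Hlam. destruct (qc_lim lam Hlam) as [Q HQ]. exists (Q + lam).
apply (is_lim_ext (fun t => (q t - lam - Cmod (c t) ^ 2 / (d t - lam)) + lam)); [intros; ring|].
lim_infty_rules.
Qed.

Lemma finite_dinf_coefficient_lims (r : R) : dinf = Finite r ->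
  exists pinf B qinf Cc Y0,
    lim_infty p pinf /\ lim_infty (fun t => Cmod (b t) ^ 2) B /\
    lim_infty q qinf /\ lim_infty (fun t => Cmod (c t) ^ 2) Cc /\
    lim_infty (fun t => Im (b t * Cconj (c t))%C) Y0 /\ (pinf = 0 -> B <> 0).
Proof.
intros Hr. assert (Hd : lim_infty d r) by (rewrite <- Hr; exact d_lim).
assert (Hfin : forall x, x <> r -> Finite x <> dinf) by (intros x Hx; rewrite Hr; congruence).
destruct pi_lim_nonzero as (ls & lv & Hls & Hlv & Hlv0).
destruct (notE_exists_other ls Hls) as [mu [Hmu Hmuls]].
destruct (pi_lims mu Hmu) as [[lm Hlm] _].
assert (Hrls : r <> ls) by (intros ->; now apply (proj2 Hls); rewrite Hr).
assert (Hrmu : r <> mu) by (intros ->; now apply (proj2 Hmu); rewrite Hr).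
destruct (pencil_lims_finite (fun t => Cmod (b t) ^ 2) p d r ls mu lv lm) as [HB Hp];
  [congruence | assumption | assumption | assumption | assumption | assumption |].
set (B := (lv - lm) / (mu - ls) * ((r - ls) * (r - mu))) in HB.
set (pinf := lv + (lv - lm) / (mu - ls) * (r - mu)) in Hp. clearbody B pinf.
assert (Hlv_eq : lv = pinf - B / (r - ls)).
{ apply (lim_infty_unique _ _ _ Hlv). unfold pi_f. lim_infty_rules. lra. }
destruct (q_pencil_lim (r + 1)) as [Q1 HQ1]; [apply Hfin; lra|].
destruct (q_pencil_lim (r + 2)) as [Q2 HQ2]; [apply Hfin; lra|].
destruct (pencil_lims_finite (fun t => Cmod (c t) ^ 2) q d r (r + 1) (r + 2) Q1 Q2) as [HC Hq];
  [lra | lra | lra | assumption | assumption | assumption |].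
destruct (bc_lims (r + 1)) as [[w [_ Hw]] _]; [apply Hfin; lra|].
assert (HY : lim_infty (fun t => Im (b t * Cconj (c t))%C) (- Im w * (r - (r + 1)))).
{ apply (lim_infty_ext_near (fun t => - Im (bc_f d b c (r + 1) t) * (d t - (r + 1)))).
  - apply (filter_imp (fun t => d t - (r + 1) <> 0)); [|apply (near_infty_sub_neq_finite d r); [assumption | lra]].
    intros t Ht. rewrite Im_bc_f, Im_mul_Cconj. field. assumption.
  - lim_infty_rules. }
do 5 eexists. split; [exact Hp|]. split; [exact HB|]. split; [exact Hq|]. split; [exact HC|].
split; [exact HY|].
intros Hp0 HB0. apply Hlv0. rewrite Hlv_eq, Hp0, HB0. field. lra.
Qed.

Lemma sigma_s_finite_dinf_iff (r pinf B qinf Cc Y0 : R) : dinf = Finite r ->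
  lim_infty p pinf -> lim_infty (fun t => Cmod (b t) ^ 2) B ->
  lim_infty q qinf -> lim_infty (fun t => Cmod (c t) ^ 2) Cc ->
  lim_infty (fun t => Im (b t * Cconj (c t))%C) Y0 -> (pinf = 0 -> B <> 0) ->
  forall lam, sigma_s p q d b c dinf lam <-> notE p d b dinf lam /\
    0 <= Y0 ^ 2 - ((qinf - lam) * (r - lam) - Cc) * (pinf * (r - lam) - B).
Proof.
intros Hr Hp HB Hq HC HY HpB lam.
enough (Hchar : notE p d b dinf lam -> (sigma_s p q d b c dinf lam <->
          0 <= Y0 ^ 2 - ((qinf - lam) * (r - lam) - Cc) * (pinf * (r - lam) - B)))
  by (split; [intros Hs; pose proof (proj1 Hs) | ]; tauto).
intros HnE. assert (Hd : lim_infty d r) by (rewrite <- Hr; exact d_lim).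
assert (Hrl : r - lam <> 0) by (intros H; apply (proj2 HnE); rewrite Hr; f_equal; lra).
assert (Hnear := near_infty_sub_neq_finite d r lam Hd ltac:(lra)).
assert (Hpi : lim_infty (fun t => pi_f p d b t lam) (pinf - B / (r - lam))) by (unfold pi_f; lim_infty_rules).
assert (Ha0 : pinf - B / (r - lam) <> 0).
{ destruct (Req_dec pinf 0) as [Hp0|Hp0].
  - intros H. apply (HpB Hp0).
    replace B with ((pinf - (pinf - B / (r - lam))) * (r - lam)) by (field; assumption).
    rewrite H, Hp0. ring.
  - intros H. apply (proj1 HnE), (in_clDelta_of_pi_lim_0 lam ((r - lam) / pinf)); [assumption | |].
    + now rewrite <- H.
    + lim_infty_rules. }
rewrite (sigma_s_iff_discr lam _ (- 2 * Y0 / (r - lam)) (qinf - lam - Cc / (r - lam)) HnE Hnear Hpi Ha0)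
  by lim_infty_rules.
replace (Y0 ^ 2 - ((qinf - lam) * (r - lam) - Cc) * (pinf * (r - lam) - B))
  with ((r - lam) ^ 2 / 4 * (- 2 * Y0 / (r - lam) * (- 2 * Y0 / (r - lam))
          - 4 * (qinf - lam - Cc / (r - lam)) * (pinf - B / (r - lam)))) by (field; assumption).
rewrite Rmult_nonneg_iff_l; [reflexivity|].
apply Rdiv_lt_0_compat; [apply pow2_gt_0 | lra]; assumption.
Qed.

Lemma finite_dinf_shape (r : R) : dinf = Finite r -> exists sm sp s : R, sm <= sp <= s /\
  (forall l : Rbar, is_lim p p_infty l -> Rbar_lt (Finite 0) l ->
     (forall lam, sigma_s p q d b c dinf lam <->
        (((sm <= lam <= sp) \/ s <= lam) /\ notE p d b dinf lam)) \/
     (forall lam, sigma_s p q d b c dinf lam <-> (s <= lam /\ notE p d b dinf lam))) /\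
  (is_lim p p_infty (Finite 0) ->
     forall lam, sigma_s p q d b c dinf lam <-> ((lam <= sm \/ sp <= lam) /\ notE p d b dinf lam)).
Proof.
intros Hr.
destruct (finite_dinf_coefficient_lims r Hr) as (pinf & B & qinf & Cc & Y0 & Hp & HB & Hq & HC & HY & HpB).
pose proof (sigma_s_finite_dinf_iff r pinf B qinf Cc Y0 Hr Hp HB Hq HC HY HpB) as Hchar.
assert (Hp0 : 0 <= pinf).
{ apply (lim_infty_nonneg p); [|exact Hp].
  apply (filter_imp _ _ (fun t Ht => Rlt_le _ _ (p_pos t (Rlt_le _ _ Ht))) (near_infty_gt 0)). }
assert (HB0 : 0 <= B).
{ apply (lim_infty_nonneg (fun t => Cmod (b t) ^ 2)); [|exact HB].
  apply (filter_imp _ _ (fun t _ => pow2_ge_0 (Cmod (b t))) (near_infty_gt 0)). }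
destruct (Rle_lt_or_eq_dec 0 pinf Hp0) as [Hpp|Hpz].
- assert (Hcubic : forall lam, Y0 ^ 2 - ((qinf - lam) * (r - lam) - Cc) * (pinf * (r - lam) - B)
    = pinf * lam ^ 3 + (- (pinf * r - B + pinf * (qinf + r))) * lam ^ 2
      + ((qinf + r) * (pinf * r - B) + pinf * (qinf * r - Cc)) * lam
      + (Y0 ^ 2 - (qinf * r - Cc) * (pinf * r - B))) by (intros; ring).
  destruct (cubic_nonneg_set pinf (- (pinf * r - B + pinf * (qinf + r)))
    ((qinf + r) * (pinf * r - B) + pinf * (qinf * r - Cc))
    (Y0 ^ 2 - (qinf * r - Cc) * (pinf * r - B)) Hpp) as (sm & sp & s & Hs & Hset).
  exists sm, sp, s. split; [exact Hs|]. split.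
  + intros l _ _. left. intros lam. rewrite Hchar, Hcubic, Hset. tauto.
  + intros Hp0'. rewrite (lim_infty_unique _ _ _ Hp Hp0') in Hpp. lra.
- assert (HBp : 0 < B) by (destruct HB0; [assumption | now destruct (HpB (eq_sym Hpz))]).
  assert (Hquad : forall lam, Y0 ^ 2 - ((qinf - lam) * (r - lam) - Cc) * (pinf * (r - lam) - B)
    = B * lam * lam + (- B * (qinf + r)) * lam + (Y0 ^ 2 + B * (qinf * r - Cc)))
    by (intros; rewrite <- Hpz; ring).
  destruct (quadratic_nonneg_set_pos_lead B (- B * (qinf + r)) (Y0 ^ 2 + B * (qinf * r - Cc)) HBp)
    as (sm & sp & Hs & Hset).
  exists sm, sp, sp. split; [lra|]. split.
  + intros l Hl Hl0. rewrite (lim_infty_Rbar_unique _ _ _ Hl Hp), <- Hpz in Hl0. simpl in Hl0. lra.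
  + intros _ lam. rewrite Hchar, Hquad, Hset. tauto.
Qed.

Lemma notE_infinite_iff (lam : R) : ~ is_finite dinf ->
  (notE p d b dinf lam <-> ~ in_clDelta p d b lam).
Proof.
intros Hinf. unfold notE. split; [tauto|]. intros H. split; [assumption|].
intros Heq. apply Hinf. now rewrite <- Heq.
Qed.

Lemma infinite_dinf_coefficient_lims : ~ is_finite dinf ->
  exists L P K Q Iw,
    (forall lam, lim_infty (fun t => pi_f p d b t lam) (P - L * lam)) /\
    (forall u v, lim_infty (fun t => Cmod (b t) ^ 2 / ((d t - u) * (d t - v))) L) /\
    (forall u v, lim_infty (fun t => Cmod (c t) ^ 2 / ((d t - u) * (d t - v))) K) /\
    (forall lam, lim_infty (fun t => q t - lam - Cmod (c t) ^ 2 / (d t - lam)) (Q - (1 + K) * lam)) /\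
    (forall lam, lim_infty (fun t => - 2 * Im (b t * Cconj (c t))%C / (d t - lam)) (2 * Iw)) /\
    (L = 0 -> P <> 0).
Proof.
intros Hinf. assert (Hfin : forall x, Finite x <> dinf) by (intros x Hx; apply Hinf; now rewrite <- Hx).
destruct pi_lim_nonzero as (ls & lv & Hls & Hlv & Hlv0).
destruct (notE_exists_other ls Hls) as [mu [Hmu Hmuls]].
destruct (pi_lims mu Hmu) as [[lm Hlm] _].
destruct (pencil_lims_infinite (fun t => Cmod (b t) ^ 2) p d dinf ls mu lv lm) as [HL Hpi];
  [congruence | assumption | assumption | assumption | assumption |].
set (L := (lv - lm) / (mu - ls)) in HL, Hpi. clearbody L.
destruct (q_pencil_lim 0 (Hfin 0)) as [Q0 HQ0].
destruct (q_pencil_lim 1 (Hfin 1)) as [Q1 HQ1].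
destruct (pencil_lims_infinite (fun t => Cmod (c t) ^ 2) q d dinf 0 1 Q0 Q1) as [HK Hq];
  [lra | assumption | assumption | assumption | assumption |].
set (K := (Q0 - Q1) / (1 - 0)) in HK, Hq. clearbody K.
destruct (bc_lims 0 (Hfin 0)) as [[w [_ Hw]] _].
exists L, (lv + ls * L), K, Q0, (Im w). split; [|split; [exact HL|split; [exact HK|split; [|split]]]].
- intros lam. eapply lim_infty_eq; [apply Hpi | ring].
- intros lam. apply (is_lim_ext (fun t => (q t - Cmod (c t) ^ 2 / (d t - lam)) - lam)); [intros; ring|].
  eapply lim_infty_eq; [apply lim_infty_minus; [apply Hq | apply lim_infty_const] | ring].
- intros lam.
  apply (lim_infty_ext_near (fun t => 2 * Im (bc_f d b c 0 t) * ((d t - 0) / (d t - lam)))).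
  + apply (filter_imp (fun t => d t - 0 <> 0 /\ d t - lam <> 0));
      [|apply filter_and; apply (near_infty_sub_neq_infinite d dinf); assumption].
    intros t [Ht0 Htl]. rewrite Im_bc_f, Im_mul_Cconj. rewrite Rminus_0_r in *. field. split; assumption.
  + pose proof (lim_infty_ratio_sub_infinite d dinf 0 lam Hinf d_lim).
    eapply lim_infty_eq; [lim_infty_rules | ring].
- intros HL0 HP0. apply Hlv0. rewrite HL0 in HP0. lra.
Qed.

Lemma sigma_s_infinite_dinf_iff (L P K Q Iw : R) : ~ is_finite dinf ->
  (forall lam, lim_infty (fun t => pi_f p d b t lam) (P - L * lam)) ->
  (forall u v, lim_infty (fun t => Cmod (b t) ^ 2 / ((d t - u) * (d t - v))) L) ->
  (forall lam, lim_infty (fun t => q t - lam - Cmod (c t) ^ 2 / (d t - lam)) (Q - (1 + K) * lam)) ->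
  (forall lam, lim_infty (fun t => - 2 * Im (b t * Cconj (c t))%C / (d t - lam)) (2 * Iw)) ->
  (L = 0 -> P <> 0) ->
  forall lam, sigma_s p q d b c dinf lam <-> ~ in_clDelta p d b lam /\
    0 <= Iw ^ 2 - (Q - (1 + K) * lam) * (P - L * lam).
Proof.
intros Hinf Hpi HL Hq HY HLP lam. rewrite <- (notE_infinite_iff lam Hinf).
enough (Hchar : notE p d b dinf lam -> (sigma_s p q d b c dinf lam <->
          0 <= Iw ^ 2 - (Q - (1 + K) * lam) * (P - L * lam)))
  by (split; [intros Hs; pose proof (proj1 Hs) | ]; tauto).
intros HnE. pose proof (near_infty_sub_neq_infinite d dinf lam Hinf d_lim) as Hnear.
assert (Ha0 : P - L * lam <> 0).
{ destruct (Req_dec L 0) as [HL0|HL0].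
  - rewrite HL0, Rmult_0_l, Rminus_0_r. exact (HLP HL0).
  - intros H. apply (proj1 HnE), (in_clDelta_of_pi_lim_0 lam (/ L)); [assumption | now rewrite <- H |].
    (* [(d - lam) / p] is the inverse of [pi / (d - lam) + |b|^2 / (d - lam)^2]. *)
    apply (lim_infty_ext_near (fun t => / (pi_f p d b t lam * / (d t - lam)
                                           + Cmod (b t) ^ 2 / ((d t - lam) * (d t - lam))))).
    + apply (filter_imp (fun t => 0 < t /\ d t - lam <> 0));
        [|apply filter_and; [apply near_infty_gt | assumption]].
      intros t [Ht Htl]. pose proof (p_pos t ltac:(lra)). unfold pi_f. field.
      split; [lra | split; [assumption|]].
      replace (p t * (d t - lam) - Cmod (b t) ^ 2 + Cmod (b t) ^ 2) with (p t * (d t - lam)) by ring.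
      apply Rmult_integral_contrapositive; split; [lra | assumption].
    + pose proof (lim_infty_inv_sub_infinite d dinf lam Hinf d_lim).
      apply (lim_infty_eq _ (/ ((P - L * lam) * 0 + L))); [|f_equal; ring].
      apply lim_infty_inv; [|rewrite Rmult_0_r, Rplus_0_l; assumption].
      apply lim_infty_plus; [apply lim_infty_mult; [apply Hpi | assumption] | apply HL]. }
rewrite (sigma_s_iff_discr lam (P - L * lam) (2 * Iw) (Q - (1 + K) * lam) HnE Hnear (Hpi lam) Ha0 (HY lam) (Hq lam)).
replace (2 * Iw * (2 * Iw) - 4 * (Q - (1 + K) * lam) * (P - L * lam))
  with (4 * (Iw ^ 2 - (Q - (1 + K) * lam) * (P - L * lam))) by ring.
rewrite Rmult_nonneg_iff_l; [reflexivity | lra].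
Qed.

(* Since [d -> -oo], eventually [p - |b|^2 / d >= p > 0]. *)
Lemma lim_p_sub_div_d_nonneg (P : R) : dinf = m_infty ->
  lim_infty (fun t => p t - Cmod (b t) ^ 2 / d t) P -> 0 <= P.
Proof.
intros Hm HP. apply (lim_infty_nonneg (fun t => p t - Cmod (b t) ^ 2 / d t) P); [|exact HP].
assert (Hdneg : near_infty (fun t => d t < 0))
  by (rewrite Hm in d_lim; apply (d_lim (fun y => y < 0)); now exists 0).
apply (filter_imp (fun t => 0 < t /\ d t < 0)); [|apply filter_and; [apply near_infty_gt | exact Hdneg]].
intros t [Ht Hdt]. pose proof (p_pos t ltac:(lra)).
assert (0 <= - (Cmod (b t) ^ 2 / d t)).
{ unfold Rdiv. rewrite Ropp_mult_distr_r, <- Rinv_opp.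
  apply Rmult_le_pos; [apply pow2_ge_0 | left; apply Rinv_0_lt_compat; lra]. }
lra.
Qed.

Lemma infinite_dinf_shape : ~ is_finite dinf -> exists sm sp s : R, sm <= sp <= s /\
  (forall l : Rbar, is_lim (fun t => Cmod (b t) ^ 2 / d t ^ 2) p_infty l -> Rbar_lt (Finite 0) l ->
     forall lam, sigma_s p q d b c dinf lam <-> (sm <= lam <= sp /\ ~ in_clDelta p d b lam)) /\
  (forall l : Rbar, is_lim (fun t => Cmod (b t) ^ 2 / d t ^ 2) p_infty (Finite 0) ->
     is_lim (fun t => p t - Cmod (b t) ^ 2 / d t) p_infty l -> Rbar_lt (Finite 0) l ->
     forall lam, sigma_s p q d b c dinf lam <-> (s <= lam /\ ~ in_clDelta p d b lam)) /\
  (forall l : Rbar, is_lim (fun t => Cmod (b t) ^ 2 / d t ^ 2) p_infty (Finite 0) ->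
     is_lim (fun t => p t - Cmod (b t) ^ 2 / d t) p_infty l -> Rbar_lt l (Finite 0) ->
     forall lam, sigma_s p q d b c dinf lam <-> (lam <= s /\ ~ in_clDelta p d b lam)) /\
  (dinf = m_infty -> is_lim (fun t => Cmod (b t) ^ 2 / d t ^ 2) p_infty (Finite 0) ->
     forall lam, sigma_s p q d b c dinf lam <-> (s <= lam /\ ~ in_clDelta p d b lam)).
Proof.
intros Hinf.
destruct (infinite_dinf_coefficient_lims Hinf) as (L & P & K & Q & Iw & Hpi & HL & HK & Hq & HY & HLP).
pose proof (sigma_s_infinite_dinf_iff L P K Q Iw Hinf Hpi HL Hq HY HLP) as Hchar.
assert (HLd : lim_infty (fun t => Cmod (b t) ^ 2 / d t ^ 2) L).
{ apply (is_lim_ext (fun t => Cmod (b t) ^ 2 / ((d t - 0) * (d t - 0)))); [intros t; f_equal; ring | apply HL]. }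
assert (HPd : lim_infty (fun t => p t - Cmod (b t) ^ 2 / d t) P).
{ apply (is_lim_ext (fun t => pi_f p d b t 0)); [intros t; unfold pi_f; now rewrite Rminus_0_r|].
  eapply lim_infty_eq; [apply Hpi | ring]. }
pose proof (pencil_ratio_nonneg _ d dinf 0 L Hinf d_lim (fun t => pow2_ge_0 _) (HL 0 0)) as HL0.
pose proof (pencil_ratio_nonneg _ d dinf 0 K Hinf d_lim (fun t => pow2_ge_0 _) (HK 0 0)) as HK0.
assert (HL_zero : forall l, is_lim (fun t => Cmod (b t) ^ 2 / d t ^ 2) p_infty l -> l = Finite 0 -> L = 0)
  by (intros l Hl ->; apply (lim_infty_unique _ _ _ HLd Hl)).
destruct HL0 as [HLp|<-].
- assert (Hpoly : forall lam, Iw ^ 2 - (Q - (1 + K) * lam) * (P - L * lam)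
    = - (1 + K) * L * lam * lam + ((1 + K) * P + L * Q) * lam + (Iw ^ 2 - Q * P)) by (intros; ring).
  destruct (quadratic_nonneg_set_neg_lead (- (1 + K) * L) ((1 + K) * P + L * Q) (Iw ^ 2 - Q * P))
    as [(sm & sp & Hs & Hset)|Hneg]; [nra| |].
  + exists sm, sp, sp. split; [lra|]. split; [intros l _ _ lam; rewrite Hchar, Hpoly, Hset; tauto|].
    split; [|split]; intros ? Hl; exfalso; pose proof (HL_zero _ Hl eq_refl); lra.
  + (* [sigma^s] is empty, and so is [[Delta 0, Delta 0]] minus the closure of [Delta]. *)
    set (D0 := Defs.Delta p d b 0). exists D0, D0, D0. split; [lra|]. split.
    * intros l _ _ lam. rewrite Hchar, Hpoly. split; [intros [_ H]; pose proof (Hneg lam); lra|].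
      intros [Hlam Hcl]. exfalso. apply Hcl. intros eps Heps. exists 0. split; [lra|].
      replace lam with D0 by lra. unfold D0. now rewrite Rminus_diag, Rabs_R0.
    * split; [|split]; intros ? Hl; exfalso; pose proof (HL_zero _ Hl eq_refl); lra.
- pose proof (HLP eq_refl) as HP0.
  set (s0 := (Q * P - Iw ^ 2) / ((1 + K) * P)).
  assert (Hlin : forall lam, Iw ^ 2 - (Q - (1 + K) * lam) * (P - 0 * lam) = (1 + K) * P * (lam - s0))
    by (intros; unfold s0; field; split; [assumption | lra]).
  assert (Hpos : 0 < P -> forall lam, sigma_s p q d b c dinf lam <-> (s0 <= lam /\ ~ in_clDelta p d b lam)).
  { intros HP lam. rewrite Hchar, Hlin, Rmult_nonneg_iff_l by nra. split; intros [H1 H2]; split; lra || assumption. }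
  assert (Hneg : P < 0 -> forall lam, sigma_s p q d b c dinf lam <-> (lam <= s0 /\ ~ in_clDelta p d b lam)).
  { intros HP lam. rewrite Hchar, Hlin.
    replace ((1 + K) * P * (lam - s0)) with (- ((1 + K) * P) * (s0 - lam)) by ring.
    rewrite Rmult_nonneg_iff_l by nra. split; intros [H1 H2]; split; lra || assumption. }
  exists s0, s0, s0. split; [lra|]. split; [|split; [|split]].
  + intros l Hl Hl0. rewrite (lim_infty_Rbar_unique _ _ _ Hl HLd) in Hl0. simpl in Hl0. lra.
  + intros l _ Hl Hl0. rewrite (lim_infty_Rbar_unique _ _ _ Hl HPd) in Hl0. now apply Hpos.
  + intros l _ Hl Hl0. rewrite (lim_infty_Rbar_unique _ _ _ Hl HPd) in Hl0. now apply Hneg.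
  + intros Hm _. apply Hpos. pose proof (lim_p_sub_div_d_nonneg P Hm HPd). lra.
Qed.

End SingularSpectrum.
Theorem proposition5p3
  (p d q : R -> R) (b c : R -> C) (dinf : Rbar) (beta gamma : R) :
  Ck_half 2 p -> Ck_half 2 d -> CCk_half 2 b -> CCk_half 1 c -> Ck_half 0 q ->
  (forall t, 0 <= t -> 0 < p t) ->
  (* (B1) *)
  is_lim d p_infty dinf ->
  (* (B2) *)
  0 < beta -> 0 < gamma ->
  (forall t, 0 <= t -> Cmod (b t) <= beta * (Rabs (d t) + 1)) ->
  (forall t, 0 <= t -> Cmod (c t) <= gamma * (Rabs (d t) + 1)) ->
  (* (C1) *)
  (forall lam, notE p d b dinf lam ->
     ex_finite_lim (fun t => pi_f p d b t lam) p_infty /\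
     ex_finite_lim (fun t => Derive (fun s => pi_f p d b s lam) t) p_infty) ->
  (exists lam l, notE p d b dinf lam /\
     is_lim (fun t => pi_f p d b t lam) p_infty (Finite l) /\ l <> 0) ->
  (* (C2) *)
  (forall lam, Finite lam <> dinf ->
     ex_limC (bc_f d b c lam) /\
     ex_limC (fun t => CDerive (bc_f d b c lam) t)) ->
  (* (C3) *)
  (forall lam, Finite lam <> dinf ->
     ex_finite_lim (fun t => q t - lam - (Cmod (c t))^2 / (d t - lam)) p_infty) ->
  exists sm sp s : R, sm <= sp <= s /\
  (* (i) *)
  (forall r, dinf = Finite r ->
     (forall l : Rbar, is_lim p p_infty l -> Rbar_lt (Finite 0) l ->
        (forall lam, sigma_s p q d b c dinf lam <->
           (((sm <= lam <= sp) \/ s <= lam) /\ notE p d b dinf lam))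
        \/
        (forall lam, sigma_s p q d b c dinf lam <->
           (s <= lam /\ notE p d b dinf lam))) /\
     (is_lim p p_infty (Finite 0) ->
        forall lam, sigma_s p q d b c dinf lam <->
          ((lam <= sm \/ sp <= lam) /\ notE p d b dinf lam))) /\
  (* (ii) *)
  (dinf = p_infty ->
     (forall l : Rbar,
        is_lim (fun t => (Cmod (b t))^2 / (d t)^2) p_infty l ->
        Rbar_lt (Finite 0) l ->
        forall lam, sigma_s p q d b c dinf lam <->
          (sm <= lam <= sp /\ ~ in_clDelta p d b lam)) /\
     (forall l : Rbar,
        is_lim (fun t => (Cmod (b t))^2 / (d t)^2) p_infty (Finite 0) ->
        is_lim (fun t => p t - (Cmod (b t))^2 / d t) p_infty l ->
        Rbar_lt (Finite 0) l ->
        forall lam, sigma_s p q d b c dinf lam <->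
          (s <= lam /\ ~ in_clDelta p d b lam)) /\
     (forall l : Rbar,
        is_lim (fun t => (Cmod (b t))^2 / (d t)^2) p_infty (Finite 0) ->
        is_lim (fun t => p t - (Cmod (b t))^2 / d t) p_infty l ->
        Rbar_lt l (Finite 0) ->
        forall lam, sigma_s p q d b c dinf lam <->
          (lam <= s /\ ~ in_clDelta p d b lam))) /\
  (* (iii) *)
  (dinf = m_infty ->
     (forall l : Rbar,
        is_lim (fun t => (Cmod (b t))^2 / (d t)^2) p_infty l ->
        Rbar_lt (Finite 0) l ->
        forall lam, sigma_s p q d b c dinf lam <->
          (sm <= lam <= sp /\ ~ in_clDelta p d b lam)) /\
     (is_lim (fun t => (Cmod (b t))^2 / (d t)^2) p_infty (Finite 0) ->
        forall lam, sigma_s p q d b c dinf lam <->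
          (s <= lam /\ ~ in_clDelta p d b lam))).
Proof.
intros Hp Hd [Hbr Hbi] [Hcr Hci] _ Hpos Hdlim _ _ _ _ Hpi Hpi0 Hbc Hqc.
pose proof (Ck_half_ex_derive 1 p Hp) as Dp. pose proof (Ck_half_ex_derive 1 d Hd) as Dd.
pose proof (Ck_half_ex_derive 1 _ Hbr) as Dbr. pose proof (Ck_half_ex_derive 1 _ Hbi) as Dbi.
pose proof (Ck_half_ex_derive 0 _ Hcr) as Dcr. pose proof (Ck_half_ex_derive 0 _ Hci) as Dci.
destruct dinf as [r| |].
- destruct (finite_dinf_shape p d q b c _ Hpos Dp Dd Dbr Dbi Dcr Dci Hdlim Hpi Hpi0 Hbc Hqc r eq_refl)
    as (sm & sp & s & Hs & Hlim_pos & Hlim_zero).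
  exists sm, sp, s. split; [exact Hs|].
  split; [intros r' _; now split | split; intros Heq; discriminate Heq].
- destruct (infinite_dinf_shape p d q b c _ Hpos Dp Dd Dbr Dbi Dcr Dci Hdlim Hpi Hpi0 Hbc Hqc)
    as (sm & sp & s & Hs & HL & HP_pos & HP_neg & _); [easy|].
  exists sm, sp, s. split; [exact Hs|].
  split; [intros r' Heq; discriminate Heq | split; [intros _; now split | intros Heq; discriminate Heq]].
- destruct (infinite_dinf_shape p d q b c _ Hpos Dp Dd Dbr Dbi Dcr Dci Hdlim Hpi Hpi0 Hbc Hqc)
    as (sm & sp & s & Hs & HL & _ & _ & Hm); [easy|].
  exists sm, sp, s. split; [exact Hs|].
  split; [intros r' Heq; discriminate Heq | split; [intros Heq; discriminate Heq | intros _; split; auto]].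
Qed.
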